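(* Let $M=\Pi\backslash\mathrm{Sol}_1^4$ be an infra-$\mathrm{Sol}_1^4$ manifold with $\Pi\subset\mathrm{Sol}_1^4\rtimes D_4$, and let $s$ be its translational involution. Then either $s$ acts freely on $M$, or every component of the fixed point set of $s$ is $2$-dimensional.
   Context: $\mathrm{Sol}_1^4$ is the group of real matrices $\begin{pmatrix}1&e^ux&z\\0&e^u&y\\0&0&1\end{pmatrix}$; its center is $\{x=y=u=0\}\cong\mathbb{R}$. $D_4\subset\mathrm{Aut}(\mathrm{Sol}_1^4)$ is the group of $8$ automorphisms given, for $A=\begin{pmatrix}a&b\\c&d\end{pmatrix}\in\{\begin{pmatrix}\pm1&0\\0&\pm1\end{pmatrix},\begin{pmatrix}0&\pm1\\\pm1&0\end{pmatrix}\}$, by $\begin{pmatrix}1&e^ux&z\\0&e^u&y\\0&0&1\end{pmatrix}\mapsto\begin{pmatrix}1&e^{\bar Au}(ax+by)&\tfrac12(acx^2+2bcxy+bdy^2+2(ad-bc)z)\\0&e^{\bar Au}&cx+dy\\0&0&1\end{pmatrix}$, $\bar A=+1$ for diagonal $A$ and $-1$ otherwise. An infra-$\mathrm{Sol}_1^4$ manifold is $M=\Pi\backslash\mathrm{Sol}_1^4$ with $\Pi$ a discrete, cocompact, torsion-free subgroup of $\mathrm{Sol}_1^4\rtimes D_4$ acting by $(a,A)\cdot g=a\,A(g)$. The intersection of $\Pi$ with the center is infinite cyclic, generated by the central element with $z=1/q$ ($q>0$). Let $s$ be the central element with $z=1/(2q)$; for every $\alpha\in\Pi$ one has $s\alpha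 s^{-1}=\alpha$ or $s\alpha s^{-1}=s^2\alpha$, so $s$ normalizes $\Pi$ and its action on $\mathrm{Sol}_1^4$ descends to an involution of $M$, called the translational involution. *)

From HB Require Import structures.
From mathcomp Require Import all_boot all_order all_algebra.
From mathcomp Require Import all_classical all_reals all_analysis.
Set Implicit Arguments. Unset Strict Implicit. Unset Printing Implicit Defensive.
Import Order.TTheory GRing.Theory Num.Theory.
Import numFieldNormedType.Exports.
Local Open Scope ring_scope.
Local Open Scope classical_set_scope.

Section InfraSol.
Variable R : realType.

(* An element of Sol_1^4 is encoded by its coordinates ((x, y), z), u),
   standing for the matrix
     [ 1  e^u x  z ]
     [ 0  e^u    y ]
     [ 0  0      1 ].                                                     *)
Definition sol := (R * R * R * R)%type.
Definition solx (g : sol) : R := g.1.1.1.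
Definition soly (g : sol) : R := g.1.1.2.
Definition solz (g : sol) : R := g.1.2.
Definition solu (g : sol) : R := g.2.
Definition mksol (x y z u : R) : sol := (x, y, z, u).

Definition solmx (g : sol) : 'M[R]_3 :=
  \matrix_(i < 3, j < 3)
    if (i == 0%N :> nat) then
      (if (j == 0%N :> nat) then 1 else if (j == 1%N :> nat)
       then expR (solu g) * solx g else solz g)
    else if (i == 1%N :> nat) then
      (if (j == 0%N :> nat) then 0 else if (j == 1%N :> nat)
       then expR (solu g) else soly g)
    else (if (j == 2%N :> nat) then 1 else 0).

(* Group law of Sol_1^4 = matrix multiplication, written out in coordinates:
   solmx (solmul g h) = solmx g *m solmx h. *)
Definition solmul (g h : sol) : sol :=
  mksol (solx g + expR (- solu g) * solx h)
        (soly g + expR (solu g) * soly h)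
        (solz g + solz h + expR (solu g) * solx g * soly h)
        (solu g + solu h).

Definition sol1 : sol := mksol 0 0 0 0.

Definition mx2 (a b c d : R) : 'M[R]_2 :=
  \matrix_(i < 2, j < 2)
    if (i == 0%N :> nat) then (if (j == 0%N :> nat) then a else b)
    else (if (j == 0%N :> nat) then c else d).

Definition is_D4 (A : 'M[R]_2) : Prop :=
  exists e1 e2 : R, (e1 = 1 \/ e1 = -1) /\ (e2 = 1 \/ e2 = -1) /\
    (A = mx2 e1 0 0 e2 \/ A = mx2 0 e1 e2 0).

Definition Abar (A : 'M[R]_2) : R := if A 0 1 == 0 then 1 else -1.

Definition d4act (A : 'M[R]_2) (g : sol) : sol :=
  let a := A 0 0 in let b := A 0 1 in let c := A 1 0 in let d := A 1 1 in
  let x := solx g in let y := soly g in let z := solz g in let u := solu g in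
  mksol (a * x + b * y) (c * x + d * y)
        (2^-1 * (a * c * x ^+ 2 + 2 * b * c * x * y + b * d * y ^+ 2
                 + 2 * (a * d - b * c) * z))
        (Abar A * u).

Definition elem := (sol * 'M[R]_2)%type.
Definition act (al : elem) (g : sol) : sol := solmul al.1 (d4act al.2 g).
Definition emul (al be : elem) : elem :=
  (solmul al.1 (d4act al.2 be.1), al.2 *m be.2).
Definition eid : elem := (sol1, 1%:M).
Definition epow (al : elem) (n : nat) : elem := iter n (emul al) eid.

Definition is_subgroup (Pi : set elem) : Prop :=
  (forall al, Pi al -> is_D4 al.2) /\
  Pi eid /\
  (forall al be, Pi al -> Pi be -> Pi (emul al be)) /\
  (forall al, Pi al -> exists be, Pi be /\ emul al be = eid).

(* discrete in Sol x| D_4 (D_4 carrying the discrete topology) *)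
Definition is_discrete (Pi : set elem) : Prop :=
  forall al, Pi al -> exists U : set sol, open U /\ U al.1 /\
    forall be, Pi be -> be.2 = al.2 -> U be.1 -> be = al.

Definition is_cocompact (Pi : set elem) : Prop :=
  exists K : set sol, compact K /\
    forall g, exists al k, Pi al /\ K k /\ g = act al k.

Definition is_torsion_free (Pi : set elem) : Prop :=
  forall al n, Pi al -> (0 < n)%N -> epow al n = eid -> al = eid.

Definition zc (t : R) : sol := mksol 0 0 t 0.

(* Lift to Sol_1^4 of the fixed point set of the involution [g] |-> [s g]
   of M = Pi\Sol_1^4. *)
Definition lifted_fix (Pi : set elem) (s : sol) : set sol :=
  [set g | exists al, Pi al /\ solmul s g = act al g].

Definition is_2manifold (F : set sol) : Prop :=
  forall p, F p -> exists U : set sol, open U /\ U p /\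
    exists (f : (R * R)%type -> sol) (h : sol -> (R * R)%type),
      continuous f /\ {within U `&` F, continuous h} /\
      (forall v, (U `&` F) (f v)) /\ (forall v, h (f v) = v) /\
      (forall g, (U `&` F) g -> f (h g) = g).

End InfraSol.

(* An element alpha = (a, A) of Pi with alpha g = s g satisfies
   alpha s = s^(det A) alpha, so alpha^2 g = s^(det A + 1) g.  Pi acts freely
   (an element fixing a point has a fourth power with trivial linear part,
   which must be 1) and is torsion free; hence det A = -1 is impossible, and
   for det A = 1 the element s^-2 alpha^2 of Pi fixes g, so A^2 = 1.  As s is
   not in Pi, A = -I.  The element with linear part -I acting like s on g only
   depends on the base point (x, y) of g, so the lift of the fixed set is a
   union of planes {(x, y)} x R^2.  The product of two such elements of Pi is
   close to the central generator s^2 when their base points are close, so by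
   discreteness the base points are isolated and the lifted fixed set is
   (possibly vacuously) a surface. *)

From HB Require Import structures.
From mathcomp Require Import all_boot all_order all_algebra.
From mathcomp Require Import all_classical all_reals all_analysis.
From mathcomp Require Import ring lra zify.

Set Implicit Arguments.
Unset Strict Implicit.
Unset Printing Implicit Defensive.

Import Order.TTheory GRing.Theory Num.Theory.
Import numFieldNormedType.Exports.
Local Open Scope ring_scope.
Local Open Scope classical_set_scope.

Section InfraSol.
Variable R : realType.
Implicit Types (a b c d t : R) (g h : sol R) (A B : 'M[R]_2) (al be : elem R).

Lemma mx2_00 a b c d : mx2 a b c d 0 0 = a. Proof. by rewrite !mxE. Qed.
Lemma mx2_01 a b c d : mx2 a b c d 0 1 = b. Proof. by rewrite !mxE. Qed.
Lemma mx2_10 a b c d : mx2 a b c d 1 0 = c. Proof. by rewrite !mxE. Qed.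
Lemma mx2_11 a b c d : mx2 a b c d 1 1 = d. Proof. by rewrite !mxE. Qed.
Definition mx2E := (mx2_00, mx2_01, mx2_10, mx2_11).

Lemma mx2_inj a b c d a' b' c' d' : mx2 a b c d = mx2 a' b' c' d' ->
  [/\ a = a', b = b', c = c' & d = d'].
Proof.
move=> E; split; [move: (mx2_00 a b c d) | move: (mx2_01 a b c d)
  | move: (mx2_10 a b c d) | move: (mx2_11 a b c d)]; by rewrite E mx2E => ->.
Qed.

Lemma mulmx_mx2 a b c d a' b' c' d' :
  mx2 a b c d *m mx2 a' b' c' d' =
  mx2 (a * a' + b * c') (a * b' + b * d') (c * a' + d * c') (c * b' + d * d').
Proof.
apply/matrixP => i j; rewrite !mxE !big_ord_recr big_ord0 /= !mxE add0r.
by case: i => [[|[|]]] //= _; case: j => [[|[|]]] //= _.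
Qed.

Lemma mx2_1 : 1%:M = mx2 1 0 0 1 :> 'M[R]_2.
Proof. by apply/matrixP => -[[|[|[|i]]] Hi] [[|[|[|j]]] Hj]; rewrite !mxE. Qed.

Lemma Abar_diag a c d : Abar (mx2 a 0 c d) = 1.
Proof. by rewrite /Abar mx2E eqxx. Qed.

Lemma Abar_antidiag a b c d : b != 0 -> Abar (mx2 a b c d) = -1.
Proof. by rewrite /Abar mx2E => /negbTE ->. Qed.

Lemma sign_neq0 (e : R) : e = 1 \/ e = -1 -> e != 0.
Proof. by case=> ->; rewrite ?oppr_eq0 oner_eq0. Qed.

Lemma sign_sqr (e : R) : e = 1 \/ e = -1 -> e ^+ 2 = 1.
Proof. by case=> ->; rewrite ?sqrrN expr1n. Qed.

Lemma solmulA : associative (@solmul R).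
Proof.
move=> [[[x1 y1] z1] u1] [[[x2 y2] z2] u2] [[[x3 y3] z3] u3].
rewrite /solmul /mksol /solx /soly /solz /solu /= !expRN !expRD.
by congr (_, _, _, _); field; rewrite ?mulf_neq0 ?gt_eqF ?expR_gt0.
Qed.

Lemma solmul1g : left_id (sol1 R) (@solmul R).
Proof.
move=> [[[x y] z] u]; rewrite /solmul /sol1 /mksol /solx /soly /solz /solu /=.
by rewrite oppr0 expR0; congr (_, _, _, _); field.
Qed.

Lemma solmulg1 : right_id (sol1 R) (@solmul R).
Proof.
move=> [[[x y] z] u]; rewrite /solmul /sol1 /mksol /solx /soly /solz /solu /=.
by congr (_, _, _, _); ring.
Qed.

Lemma solmulIg : left_injective (@solmul R).
Proof.
move=> [[[x y] z] u] [[[x1 y1] z1] u1] [[[x2 y2] z2] u2].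
rewrite /solmul /mksol /solx /soly /solz /solu /= => -[hx hy hz hu].
have u12 : u1 = u2 by lra.
rewrite u12 in hx hy hz *.
have x12 : x1 = x2 by lra.
by rewrite x12 in hz *; congr (_, _, _, _); lra.
Qed.

Lemma zc_central t g : solmul (zc t) g = solmul g (zc t).
Proof.
case: g => [[[x y] z] u]; rewrite /solmul /zc /mksol /solx /soly /solz /solu /=.
by rewrite oppr0 expR0; congr (_, _, _, _); field.
Qed.

Lemma zcD s t : solmul (zc s) (zc t) = zc (s + t).
Proof.
rewrite /solmul /zc /mksol /solx /soly /solz /solu /= oppr0 expR0.
by congr (_, _, _, _); field.
Qed.

Definition det2 A : R := A 0 0 * A 1 1 - A 0 1 * A 1 0.

Lemma d4actM A : is_D4 A -> {morph d4act A : g h / solmul g h}.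
Proof.
case=> e1 [e2 [/sign_neq0 e10 [_ [->|->]]]] [[[x1 y1] z1] u1] [[[x2 y2] z2] u2];
  rewrite /d4act /solmul /mksol /solx /soly /solz /solu /= !mx2E.
  by rewrite Abar_diag !mul1r; congr (_, _, _, _); field.
rewrite Abar_antidiag // !mulN1r opprK !expRN.
by congr (_, _, _, _); field; rewrite ?gt_eqF ?expR_gt0.
Qed.

Lemma d4act_mulmx A B g : is_D4 A -> is_D4 B ->
  d4act (A *m B) g = d4act A (d4act B g).
Proof.
case: g => [[[x y] z] u].
case=> e1 [e2 [/sign_neq0 e10 [/sign_neq0 e20 [->|->]]]];
case=> f1 [f2 [/sign_neq0 f10 [/sign_neq0 f20 [->|->]]]];
  rewrite mulmx_mx2 /d4act /mksol /solx /soly /solz /solu /= !mx2E;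
  rewrite ?mul0r ?mulr0 ?add0r ?addr0 ?Abar_diag ?Abar_antidiag ?mulf_neq0 //;
  by congr (_, _, _, _); field.
Qed.

Lemma d4act1 g : d4act 1%:M g = g.
Proof.
case: g => [[[x y] z] u]; rewrite mx2_1 /d4act /mksol /solx /soly /solz /solu /=.
by rewrite !mx2E Abar_diag; congr (_, _, _, _); field.
Qed.

Lemma d4act_zc A t : d4act A (zc t) = zc (det2 A * t).
Proof.
rewrite /d4act /zc /det2 /mksol /solx /soly /solz /solu /=.
by congr (_, _, _, _); field.
Qed.

Lemma D4_det A : is_D4 A -> det2 A = 1 \/ det2 A = -1.
Proof.
move=> hA; suff /eqP : det2 A ^+ 2 = 1.
  by rewrite sqrf_eq1 => /orP[] /eqP; [left | right].
case: hA => e1 [e2 [/sign_sqr h1 [/sign_sqr h2 [->|->]]]];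
  by rewrite /det2 !mx2E mul0r ?mulr0 ?subr0 ?sub0r ?sqrrN exprMn h1 h2 mulr1.
Qed.

Lemma D4_exp4 A : is_D4 A -> A *m (A *m (A *m (A *m 1%:M))) = 1%:M.
Proof.
case=> e1 [e2 [he1 [he2 [->|->]]]]; rewrite !mulmx1 !mulmx_mx2 mx2_1;
  by case: he1 => ->; case: he2 => ->; congr mx2; ring.
Qed.

Lemma D4_det1_involutive A : is_D4 A -> det2 A = 1 -> A *m A = 1%:M ->
  A = 1%:M \/ A = mx2 (-1) 0 0 (-1).
Proof.
case=> e1 [e2 [he1 [he2 [->|->]]]];
  rewrite /det2 mulmx_mx2 mx2_1 !mx2E => hdet /mx2_inj [h00 _ _ _].
  by case: he1 => e1E; case: he2 => e2E; rewrite e1E e2E in hdet *;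
    [left | exfalso; lra | exfalso; lra | right].
by exfalso; lra.
Qed.

Lemma emulg1 al : emul al (eid R) = al.
Proof.
case: al => a A.
by rewrite /emul /= [d4act _ _]d4act_zc mulr0 solmulg1 mulmx1.
Qed.

Lemma actM al be g : is_D4 al.2 -> is_D4 be.2 ->
  act (emul al be) g = act al (act be g).
Proof.
case: al be => [a A] [b B] /= hA hB.
by rewrite /act /= d4act_mulmx // d4actM // solmulA.
Qed.

Lemma act_zc al t g : is_D4 al.2 ->
  act al (solmul (zc t) g) = solmul (zc (det2 al.2 * t)) (act al g).
Proof.
case: al => a A /= hA; rewrite /act /= d4actM // d4act_zc.
by rewrite solmulA -zc_central -solmulA.
Qed.

Lemma act_inj (a b : sol R) A g : act (a, A) g = act (b, A) g -> a = b.
Proof. exact: solmulIg. Qed.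

Lemma fix_act_sq al t g : is_D4 al.2 -> act al g = solmul (zc t) g ->
  act (emul al al) g = solmul (zc ((det2 al.2 + 1) * t)) g.
Proof.
move=> hA alg.
by rewrite actM // alg act_zc // alg solmulA zcD [in RHS]mulrDl mul1r.
Qed.

Definition halfturn t x y : elem R :=
  (mksol (2 * x) (2 * y) (t + 2 * x * y) 0, mx2 (-1) 0 0 (-1)).

Lemma act_halfturn t g :
  act (halfturn t (solx g) (soly g)) g = solmul (zc t) g.
Proof.
case: g => [[[x y] z] u].
rewrite /act /halfturn /zc /solmul /d4act /mksol /solx /soly /solz /solu /=.
by rewrite !mx2E Abar_diag oppr0 expR0; congr (_, _, _, _); field.
Qed.

Lemma halfturnM t x y x' y' : emul (halfturn t x y) (halfturn t x' y') =
  (mksol (2 * (x - x')) (2 * (y - y'))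
         (2 * t + 2 * (x * y + x' * y' - 2 * x * y')) 0, 1%:M).
Proof.
rewrite /emul /halfturn /solmul /d4act /mksol /solx /soly /solz /solu /=.
rewrite mulmx_mx2 mx2_1 !mx2E Abar_diag oppr0 expR0.
by congr (_, _, _, _, _); [field | field | field | field | congr mx2; ring].
Qed.

Lemma continuous_mksol (T : topologicalType) (fx fy fz fu : T -> R) :
  continuous fx -> continuous fy -> continuous fz -> continuous fu ->
  continuous (fun v => mksol (fx v) (fy v) (fz v) (fu v)).
Proof.
move=> cx cy cz cu v.
exact: cvg_pair (cvg_pair (cvg_pair (cx v) (cy v)) (cz v)) (cu v).
Qed.

Section Lattice.
Variable Pi : set (elem R).
Hypothesis Pi_sub : is_subgroup Pi.
Hypothesis Pi_tfree : is_torsion_free Pi.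

Lemma Pi_D4 al : Pi al -> is_D4 al.2.
Proof. exact: Pi_sub.1. Qed.

Lemma Pi_emul al be : Pi al -> Pi be -> Pi (emul al be).
Proof. by have [_ [_ [PiM _]]] := Pi_sub; apply: PiM. Qed.

Lemma Pi_epow al n : Pi al -> Pi (epow al n).
Proof.
by move=> Pal; elim: n => [|n IHn]; [exact: Pi_sub.2.1 | exact: Pi_emul].
Qed.

Lemma act_epow al n g : Pi al -> act (epow al n) g = iter n (act al) g.
Proof.
move=> Pal; elim: n => [|n IHn]; first by rewrite /act /= d4act1 solmul1g.
rewrite (_ : epow al n.+1 = emul al (epow al n)) // actM ?IHn //.
all: by apply: Pi_D4; first [done | exact: Pi_epow].
Qed.

Lemma Pi_act_free al g : Pi al -> act al g = g -> al = eid R.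
Proof.
move=> Pal alg; apply: (@Pi_tfree al 4) => //.
have g4 : act (epow al 4) g = g by rewrite act_epow //= !alg.
have lin4 : (epow al 4).2 = 1%:M by rewrite /= D4_exp4 //; exact: Pi_D4.
move: g4; rewrite [epow al 4]surjective_pairing lin4 /act /= d4act1.
by rewrite -{2}(solmul1g g) => /solmulIg ->.
Qed.

Lemma Pi_involution al : Pi al -> emul al al = eid R -> al = eid R.
Proof. by move=> Pal al2; apply: (@Pi_tfree al 2) => //=; rewrite emulg1. Qed.

Variable q : R.
Hypothesis q_gt0 : 0 < q.
Hypothesis Pi_center :
  forall c, Pi (zc c, 1%:M) <-> exists k : int, c = k%:~R / q.
Local Notation t := (1 / (2 * q)).

Lemma Pi_period : Pi (zc (1 / q), 1%:M).
Proof. by apply/Pi_center; exists 1; rewrite mulr1z. Qed.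

Lemma Pi_period_inv : Pi (zc (- (1 / q)), 1%:M).
Proof. by apply/Pi_center; exists (-1); rewrite mulrN1z mulNr. Qed.

Lemma half_period_notin_Pi : ~ Pi (zc t, 1%:M).
Proof.
case/Pi_center => k hk.
have : (2 * k)%:~R = 1 :> R.
  by rewrite intrM -[k%:~R](@divfK _ q) ?gt_eqF // -hk; field; rewrite gt_eqF.
rewrite -[1]/(1%:~R) => /intr_inj; lia.
Qed.

Lemma Pi_fix_det al g : Pi al -> act al g = solmul (zc t) g -> det2 al.2 = 1.
Proof.
move=> Pal alg; have hA := Pi_D4 Pal.
case: (D4_det hA) => // hdet; exfalso.
have al2 : emul al al = eid R.
  apply: (Pi_act_free (g := g) (Pi_emul Pal Pal)).
  by rewrite (fix_act_sq hA alg) hdet addNr mul0r solmul1g.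
have := congr1 (fun be : elem R => det2 be.2) (Pi_involution Pal al2).
by rewrite /= hdet mx2_1 /det2 !mx2E; lra.
Qed.

Lemma Pi_fix_linear al g : Pi al -> act al g = solmul (zc t) g ->
  al.2 = mx2 (-1) 0 0 (-1).
Proof.
move=> Pal alg; have hA := Pi_D4 Pal; have hdet := Pi_fix_det Pal alg.
have al2 : emul (zc (- (1 / q)), 1%:M) (emul al al) = eid R.
  apply: (Pi_act_free (g := g)).
    exact: Pi_emul Pi_period_inv (Pi_emul Pal Pal).
  rewrite actM; [|exact: Pi_D4 Pi_period_inv|exact: Pi_D4 (Pi_emul Pal Pal)].
  rewrite (fix_act_sq hA alg) hdet /act /= d4act1 solmulA zcD.
  by rewrite (_ : _ + _ = 0) ?solmul1g //; field; rewrite gt_eqF.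
have /(D4_det1_involutive hA hdet) [al1|//] : al.2 *m al.2 = 1%:M.
  by move: al2 => [_]; rewrite mul1mx.
case: al Pal alg {hA hdet al2} al1 => a A Pal alg /= A1.
rewrite {}A1 /act /= d4act1 in Pal alg.
by case: half_period_notin_Pi; rewrite -(solmulIg alg).
Qed.

Lemma lifted_fixE :
  lifted_fix Pi (zc t) = [set g | Pi (halfturn t (solx g) (soly g))].
Proof.
apply/seteqP; split => g /=; last first.
  by move=> Pg; exists (halfturn t (solx g) (soly g)); rewrite act_halfturn.
case=> -[a A] [Pal alg]; have /= lin := Pi_fix_linear Pal (esym alg).
move: Pal alg; rewrite lin -act_halfturn => Pal /act_inj ha.
by rewrite /halfturn ha.
Qed.

Hypothesis Pi_discrete : is_discrete Pi.

Lemma halfturn_isolated x y : Pi (halfturn t x y) ->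
  exists2 V : set (R * R), open V /\ V (x, y) &
    forall v, V v -> Pi (halfturn t v.1 v.2) -> v = (x, y).
Proof.
move=> Pxy; have [U [oU [Uper Uiso]]] := Pi_discrete Pi_period.
pose f v := (emul (halfturn t x y) (halfturn t v.1 v.2)).1.
have fE : f = fun v => mksol (2 * (x - v.1)) (2 * (y - v.2))
    (2 * t + 2 * (x * y + v.1 * v.2 - 2 * x * v.2)) 0.
  by apply: funext => v; rewrite /f halfturnM.
have f_cont : continuous f.
  have cst (k : R) : continuous (fun _ : R * R => k) by move=> ?; exact: cvg_cst.
  have c1 : continuous (fun w : R * R => w.1) by move=> ?; exact: cvg_fst.
  have c2 : continuous (fun w : R * R => w.2) by move=> ?; exact: cvg_snd.
  rewrite fE; apply: continuous_mksol => v //.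
  - exact: continuousM (cst 2 v) (continuousB (cst x v) (c1 v)).
  - exact: continuousM (cst 2 v) (continuousB (cst y v) (c2 v)).
  apply: continuousD (cst _ v) (continuousM (cst 2 v) (continuousB _ _)).
    exact: continuousD (cst _ v) (continuousM (c1 v) (c2 v)).
  exact: continuousM (continuousM (cst 2 v) (cst x v)) (c2 v).
exists (f @^-1` U); first split.
- by apply: open_comp => // v _; exact: f_cont.
- rewrite /= fE (_ : mksol _ _ _ _ = zc (1 / q)) //.
  by rewrite /mksol /zc /=; congr (_, _, _, _); field; rewrite ?gt_eqF.
move=> [vx vy] Uv Pv; have := Uiso _ (Pi_emul Pxy Pv).
rewrite halfturnM => /(_ erefl); rewrite /= fE in Uv => /(_ Uv) [hx hy _].
by congr (_, _); lra.
Qed.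

Lemma lifted_fix_2manifold : is_2manifold (lifted_fix Pi (zc t)).
Proof.
rewrite lifted_fixE => -[[[x y] z] u] /= Pxy.
have [V [oV Vxy] Viso] := halfturn_isolated Pxy.
exists [set g | V g.1.1]; split; [|split => //].
  by apply: open_comp => // g _; exact: continuous_comp cvg_fst cvg_fst.
exists (fun w => mksol x y w.1 w.2), (fun g => (g.1.2, g.2)).
split; [|split; [|split; [|split]]].
- apply: continuous_mksol => w;
    [exact: cvg_cst | exact: cvg_cst | exact: cvg_fst | exact: cvg_snd].
- apply: continuous_subspaceT => g.
  exact: cvg_pair (continuous_comp cvg_fst cvg_snd) cvg_snd.
- by [].
- by case.
move=> [[[gx gy] gz] gu] [Vg Pg].
by have [-> ->] := Viso (gx, gy) Vg Pg.
Qed.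

End Lattice.

End InfraSol.

Theorem corollary8p3 (R : realType) (Pi : set (elem R))
  (hsub : is_subgroup Pi) (hdisc : is_discrete Pi)
  (hcoc : is_cocompact Pi) (htf : is_torsion_free Pi)
  (q : R) (hq : 0 < q)
  (hcenter : forall t : R, Pi (zc t, 1%:M) <-> exists k : int, t = k%:~R / q) :
  let s := zc (1 / (2 * q)) in
  lifted_fix Pi s = set0 \/ is_2manifold (lifted_fix Pi s).
Proof. right; exact (lifted_fix_2manifold hsub htf hq hcenter hdisc). Qed.
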